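(* For every $\Pi^1_1$ sentence $\psi$ (universal second-order sentence) there is an $\mathbf{ID}$ sentence $\phi$ such that for every suitable structure $M$, $M\models\psi$ if and only if $M\models_{\{\emptyset\}}\phi$.
   Context: Fix a first-order signature; structures have non-empty domains. An assignment on $M$ is a function from a finite set of variables into the domain of $M$; $s(a/x)$ agrees with $s$ except that it sends $x$ to $a$. A team $X$ of $M$ is a set of assignments all with the same domain $dom(X)$. For $F:X\to M$, $X(F/x)=\{s(F(s)/x):s\in X\}$; $X(M/x)=\{s(a/x):a\in M,s\in X\}$. Formulas of intuitionistic dependence logic $\mathbf{ID}$: $\phi::=\alpha\mid=\!\!(t)\mid\bot\mid\phi\wedge\phi\mid\phi\veebar\phi\mid\phi\to\phi\mid\forall x\phi\mid\exists x\phi$, with $\alpha$ a first-order atomic formula and $t$ a term; free variables as usual; sentences have none. Team semantics, for $X$ with $dom(X)\supseteq$ free variables: $M\models_X\alpha$ iff $M\models_s\alpha$ for all $s\in X$; $M\models_X=\!\!(t)$ iff $s(t)=s'(t)$ for all $s,s'\in X$; $M\models_X\bot$ iff $X=\emptyset$; $\wedge$ as usual; $M\models_X\phi\veebar\psi$ iff $M\models_X\phi$ or $M\models_X\psi$; $M\models_X\phi\to\psi$ iff for every $Y\subseteq X$, $M\models_Y\phi$ implies $M\models_Y\psi$; $M\models_X\exists x\phi$ iff $M\models_{X(F/x)}\phi$ for some $F:X\to M$; $M\models_X\forall x\phi$ iff $M\models_{X(M/x)}\phi$. $M\models_{\{\emptyset\}}\phi$ means the team consisting only of the empty assignment satisfies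 $\phi$. $M\models\psi$ is standard second-order semantics. *)

From Stdlib Require Import List Arith Bool.
From Stdlib Require Vectors.Fin.
Import ListNotations.

Record signature := Signature {
  fsym : Type;
  farity : fsym -> nat;      (* constants = function symbols of arity 0 *)
  rsym : Type;
  rarity : rsym -> nat }.

Record structure (S : signature) := Structure {
  dom : Type;
  dom_ne : inhabited dom;
  fint : forall f : fsym S, (Fin.t (farity S f) -> dom) -> dom;
  rint : forall r : rsym S, (Fin.t (rarity S r) -> dom) -> Prop }.
Arguments dom {S}.
Arguments fint {S}.
Arguments rint {S}.

Inductive term (S : signature) :=
| tvar : nat -> term S
| tapp : forall f : fsym S, (Fin.t (farity S f) -> term S) -> term S.
Arguments tvar {S}.
Arguments tapp {S}.

Fixpoint tfv {S} (t : term S) (x : nat) : Prop :=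
  match t with
  | tvar y => y = x
  | tapp f a => exists j, tfv (a j) x
  end.

Inductive atom (S : signature) :=
| AEq : term S -> term S -> atom S
| ARel : forall r : rsym S, (Fin.t (rarity S r) -> term S) -> atom S.
Arguments AEq {S}.
Arguments ARel {S}.

Definition afv {S} (a : atom S) (x : nat) : Prop :=
  match a with
  | AEq t1 t2 => tfv t1 x \/ tfv t2 x
  | ARel r args => exists j, tfv (args j) x
  end.

(* An assignment is a partial function from variables to the domain whose
   domain of definition is { x | s x <> None } (finite for all assignments
   arising in the semantics of sentences, which start from the empty one). *)
Definition assignment {S} (M : structure S) := nat -> option (dom M).
Definition team {S} (M : structure S) := assignment M -> Prop.

Definition empty_assignment {S} (M : structure S) : assignment M :=
  fun _ => None.
Definition empty_team {S} (M : structure S) : team M :=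
  fun s => s = empty_assignment M.

Definition upd {S} {M : structure S} (s : assignment M) (x : nat) (a : dom M)
  : assignment M :=
  fun y => if Nat.eqb y x then Some a else s y.

Definition team_supp {S} {M : structure S} (X : team M) (F : assignment M -> dom M)
  (x : nat) : team M :=
  fun s' => exists s, X s /\ s' = upd s x (F s).
Definition team_dup {S} {M : structure S} (X : team M) (x : nat) : team M :=
  fun s' => exists s a, X s /\ s' = upd s x a.

Fixpoint teval {S} {M : structure S} (s : assignment M) (t : term S) (d : dom M)
  : Prop :=
  match t with
  | tvar y => s y = Some d
  | tapp f a => exists ds : Fin.t (farity S f) -> dom M,
      (forall j, teval s (a j) (ds j)) /\ d = fint M f ds
  end.

Definition atom_holds {S} {M : structure S} (s : assignment M) (a : atom S) : Prop :=
  match a with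
  | AEq t1 t2 => exists d, teval s t1 d /\ teval s t2 d
  | ARel r args => exists ds : Fin.t (rarity S r) -> dom M,
      (forall j, teval s (args j) (ds j)) /\ rint M r ds
  end.

Inductive idform (S : signature) :=
| IAtom : atom S -> idform S
| IDep : term S -> idform S
| IBot : idform S
| IAnd : idform S -> idform S -> idform S
| IOr : idform S -> idform S -> idform S
| IImp : idform S -> idform S -> idform S
| IAll : nat -> idform S -> idform S
| IEx : nat -> idform S -> idform S.
Arguments IAtom {S}. Arguments IDep {S}. Arguments IBot {S}.
Arguments IAnd {S}. Arguments IOr {S}. Arguments IImp {S}.
Arguments IAll {S}. Arguments IEx {S}.

Fixpoint idfv {S} (p : idform S) (x : nat) : Prop :=
  match p with
  | IAtom a => afv a x
  | IDep t => tfv t x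
  | IBot => False
  | IAnd p q | IOr p q | IImp p q => idfv p x \/ idfv q x
  | IAll y p | IEx y p => idfv p x /\ x <> y
  end.

Definition id_sentence {S} (p : idform S) : Prop := forall x, ~ idfv p x.

Fixpoint id_sat {S} (M : structure S) (X : team M) (p : idform S) : Prop :=
  match p with
  | IAtom a => forall s, X s -> atom_holds s a
  | IDep t => forall s s', X s -> X s' ->
      forall d d', teval s t d -> teval s' t d' -> d = d'
  | IBot => forall s, ~ X s
  | IAnd p q => id_sat M X p /\ id_sat M X q
  | IOr p q => id_sat M X p \/ id_sat M X q
  | IImp p q => forall Y : team M, (forall s, Y s -> X s) ->
      id_sat M Y p -> id_sat M Y q
  | IAll x p => id_sat M (team_dup X x) p
  | IEx x p => exists F : assignment M -> dom M, id_sat M (team_supp X F x) p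
  end.

(* Second-order (relation) variables are X^k_i with index i and arity k; an
   atom [SVar i args] uses the variable X^(length args)_i.  A relation of
   arity k is represented as a predicate on lists (only lists of length k
   matter). *)
Inductive soform (S : signature) :=
| SEq : term S -> term S -> soform S
| SRel : forall r : rsym S, (Fin.t (rarity S r) -> term S) -> soform S
| SVar : nat -> list (term S) -> soform S
| SNeg : soform S -> soform S
| SAnd : soform S -> soform S -> soform S
| SOr : soform S -> soform S -> soform S
| SAll : nat -> soform S -> soform S
| SEx : nat -> soform S -> soform S
| SAll2 : nat -> nat -> soform S -> soform S
| SEx2 : nat -> nat -> soform S -> soform S.
Arguments SEq {S}. Arguments SRel {S}. Arguments SVar {S}. Arguments SNeg {S}.
Arguments SAnd {S}. Arguments SOr {S}. Arguments SAll {S}. Arguments SEx {S}.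
Arguments SAll2 {S}. Arguments SEx2 {S}.

Fixpoint sofv {S} (p : soform S) (x : nat) : Prop :=
  match p with
  | SEq t1 t2 => tfv t1 x \/ tfv t2 x
  | SRel r args => exists j, tfv (args j) x
  | SVar i args => exists t, In t args /\ tfv t x
  | SNeg p | SAll2 _ _ p | SEx2 _ _ p => sofv p x
  | SAnd p q | SOr p q => sofv p x \/ sofv q x
  | SAll y p | SEx y p => sofv p x /\ x <> y
  end.

Fixpoint sofv2 {S} (p : soform S) (i k : nat) : Prop :=
  match p with
  | SEq _ _ | SRel _ _ => False
  | SVar j args => j = i /\ length args = k
  | SNeg p | SAll _ p | SEx _ p => sofv2 p i k
  | SAnd p q | SOr p q => sofv2 p i k \/ sofv2 q i k
  | SAll2 j l p | SEx2 j l p => sofv2 p i k /\ (j, l) <> (i, k)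
  end.

Definition so_sentence {S} (p : soform S) : Prop :=
  (forall x, ~ sofv p x) /\ (forall i k, ~ sofv2 p i k).

Fixpoint is_fo {S} (p : soform S) : Prop :=
  match p with
  | SEq _ _ | SRel _ _ | SVar _ _ => True
  | SNeg p | SAll _ p | SEx _ p => is_fo p
  | SAnd p q | SOr p q => is_fo p /\ is_fo q
  | SAll2 _ _ _ | SEx2 _ _ _ => False
  end.

Fixpoint is_pi11 {S} (p : soform S) : Prop :=
  match p with
  | SAll2 _ _ q => is_pi11 q
  | q => is_fo q
  end.

Definition pi11_sentence {S} (p : soform S) : Prop := is_pi11 p /\ so_sentence p.

Fixpoint tev {S} {M : structure S} (v : nat -> dom M) (t : term S) : dom M :=
  match t with
  | tvar y => v y
  | tapp f a => fint M f (fun j => tev v (a j))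
  end.

Definition soval {S} (M : structure S) := nat -> nat -> list (dom M) -> Prop.

Definition updv {S} {M : structure S} (v : nat -> dom M) (x : nat) (a : dom M) :=
  fun y => if Nat.eqb y x then a else v y.
Definition updV {S} {M : structure S} (V : soval M) (i k : nat)
  (R : list (dom M) -> Prop) : soval M :=
  fun j l => if Nat.eqb j i && Nat.eqb l k then R else V j l.

Fixpoint so_holds {S} (M : structure S) (v : nat -> dom M) (V : soval M)
  (p : soform S) : Prop :=
  match p with
  | SEq t1 t2 => tev v t1 = tev v t2
  | SRel r args => rint M r (fun j => tev v (args j))
  | SVar i args => V i (length args) (map (tev v) args)
  | SNeg p => ~ so_holds M v V p
  | SAnd p q => so_holds M v V p /\ so_holds M v V q
  | SOr p q => so_holds M v V p \/ so_holds M v V q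
  | SAll x p => forall a, so_holds M (updv v x a) V p
  | SEx x p => exists a, so_holds M (updv v x a) V p
  | SAll2 i k p => forall R, so_holds M v (updV V i k R) p
  | SEx2 i k p => exists R, so_holds M v (updV V i k R) p
  end.

(* M |= psi for a sentence psi (valuations irrelevant; we quantify over all) *)
Definition so_models {S} (M : structure S) (p : soform S) : Prop :=
  forall (v : nat -> dom M) (V : soval M), so_holds M v V p.

(* Since {∅} satisfies ¬σ exactly when it does not satisfy σ, it suffices to express
   the Σ^1_1 sentence ∃X̄ ¬θ, θ the first-order matrix of ψ, by an ID sentence σ.
   After fixing a constant c, σ treats each relation variable X in turn: either X
   is total, or σ quantifies ∀z̄ ∃w with =(z̄; w), so that the team encodes X as the
   set of tuples z̄ whose w differs from c (on one-element structures only the empty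
   relation is encodable this way, hence the total option).  Then σ quantifies all
   variables of θ and evaluates the negation normal form of ¬θ on a team containing
   every combination of a valuation of these variables with a point of the encoding:
   X(t̄) becomes z̄ = t̄ → w ≠ c and ¬X(t̄) becomes z̄ = t̄ → w = c.  Existential
   quantifiers and disjunctions (by splitting the team along u = c for a fresh u)
   are simulated by choice functions that, by dependence atoms, look only at the
   variables of θ; this keeps the team saturated and makes every translated
   formula behave pointwise in the valuations of θ's variables. *)

From Stdlib Require Import List PeanoNat Lia Cantor.
From Stdlib Require Import Classical ClassicalEpsilon FunctionalExtensionality PropExtensionality.
Import ListNotations.

(** * Team semantics *)

Section TeamSemantics.
Context {Sg : signature} (M : structure Sg).

Lemma team_ext (X Y : team M) : (forall s, X s <-> Y s) -> X = Y.
Proof.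
  intro H. apply functional_extensionality. intro s.
  apply propositional_extensionality, H.
Qed.

Lemma id_sat_downward (p : idform Sg) : forall X Y : team M,
  (forall s, Y s -> X s) -> id_sat M X p -> id_sat M Y p.
Proof.
  induction p as [a|t| |p IHp q IHq|p IHp q IHq|p IHp q IHq|x p IHp|x p IHp];
    simpl; intros X Y HYX H.
  - intros s Hs. exact (H s (HYX s Hs)).
  - intros s s' Hs Hs'. exact (H s s' (HYX s Hs) (HYX s' Hs')).
  - intros s Hs. exact (H s (HYX s Hs)).
  - split; [eapply IHp | eapply IHq]; eauto; apply H.
  - destruct H; [left; eapply IHp | right; eapply IHq]; eauto.
  - intros Z HZ. apply H. intros s Hs. exact (HYX s (HZ s Hs)).
  - apply (IHp (team_dup X x)); auto.
    intros s' (s & a & Hs & ->). exists s, a. auto.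
  - destruct H as [F HF]. exists F. apply (IHp (team_supp X F x)); auto.
    intros s' (s & Hs & ->). exists s. auto.
Qed.

Lemma sat_and (X : team M) p q : id_sat M X (IAnd p q) <-> id_sat M X p /\ id_sat M X q.
Proof. reflexivity. Qed.

Lemma sat_or (X : team M) p q : id_sat M X (IOr p q) <-> id_sat M X p \/ id_sat M X q.
Proof. reflexivity. Qed.

Definition flat (p : idform Sg) (P : assignment M -> Prop) : Prop :=
  forall X : team M, id_sat M X p <-> forall s, X s -> P s.

Lemma flat_ext p P P' : flat p P -> (forall s, P s <-> P' s) -> flat p P'.
Proof. intros Hp HP X. rewrite (Hp X). firstorder. Qed.

Definition itop : idform Sg := IImp IBot IBot.
Definition ineg (p : idform Sg) : idform Sg := IImp p IBot.

Lemma flat_atom a : flat (IAtom a) (fun s => atom_holds s a).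
Proof. intro X. reflexivity. Qed.

Lemma flat_and p q P Q : flat p P -> flat q Q -> flat (IAnd p q) (fun s => P s /\ Q s).
Proof. intros Hp Hq X. simpl. rewrite (Hp X), (Hq X). firstorder. Qed.

Lemma flat_imp p q P Q : flat p P -> flat q Q -> flat (IImp p q) (fun s => P s -> Q s).
Proof.
  intros Hp Hq X. simpl. split.
  - intros H s Hs HP.
    refine (proj1 (Hq (fun s' => s' = s)) _ s eq_refl).
    apply H; [intros ? ->; exact Hs|]. apply Hp. intros ? ->. exact HP.
  - intros H Y HY HYp. apply Hq. intros s Hs. apply H; auto. exact (proj1 (Hp Y) HYp s Hs).
Qed.

Lemma flat_top : flat itop (fun _ => True).
Proof. intro X. simpl. firstorder. Qed.

Lemma flat_neg p P : flat p P -> flat (ineg p) (fun s => ~ P s).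
Proof.
  intro Hp. apply (flat_imp _ _ _ _ Hp). intro X. simpl. firstorder.
Qed.

Lemma sat_imp_flat p q P (X : team M) : flat p P ->
  id_sat M X (IImp p q) <-> id_sat M (fun s => X s /\ P s) q.
Proof.
  intro Hp. simpl. split.
  - intros H. apply H; [tauto|]. apply Hp. tauto.
  - intros H Y HY HYp. apply (id_sat_downward q (fun s => X s /\ P s)); auto.
    intros s Hs. split; auto. exact (proj1 (Hp Y) HYp s Hs).
Qed.

Lemma sat_neg_empty_team p :
  id_sat M (empty_team M) (ineg p) <-> ~ id_sat M (empty_team M) p.
Proof.
  simpl. split.
  - intros H Hp. exact (H (empty_team M) (fun s h => h) Hp _ eq_refl).
  - intros Hn Y HY Hp s Hs. apply Hn.
    replace (empty_team M) with Y; auto.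
    apply team_ext. intro t. split; [apply HY|].
    intros ->. specialize (HY s Hs). unfold empty_team in HY. subst. exact Hs.
Qed.

Fixpoint conj_dep (xs : list nat) : idform Sg :=
  match xs with
  | [] => itop
  | x :: xs => IAnd (IDep (tvar x)) (conj_dep xs)
  end.

Definition dep (xs : list nat) (y : nat) : idform Sg := IImp (conj_dep xs) (IDep (tvar y)).

(* [=(x)] constrains only the assignments where [x] is defined. *)
Definition weak_agree (s s' : assignment M) (x : nat) : Prop :=
  forall d d', s x = Some d -> s' x = Some d' -> d = d'.

Lemma weak_agree_defined s s' x : s x <> None -> s' x <> None ->
  weak_agree s s' x <-> s x = s' x.
Proof.
  unfold weak_agree. destruct (s x), (s' x); try congruence.
  intros _ _. split; [intros E; f_equal; auto | congruence].
Qed.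

Lemma sat_conj_dep xs (Y : team M) : id_sat M Y (conj_dep xs) <->
  forall s s', Y s -> Y s' -> forall x, In x xs -> weak_agree s s' x.
Proof.
  induction xs as [|x xs IH]; simpl.
  - split; [intros _ s s' _ _ x []|auto].
  - rewrite IH. split.
    + intros [H1 H2] s s' Hs Hs' y [<-|Hy]; [exact (H1 s s' Hs Hs')|eauto].
    + intros H. split; [intros s s' Hs Hs'; exact (H s s' Hs Hs' x (or_introl eq_refl))|].
      intros s s' Hs Hs' y Hy. eauto.
Qed.

Lemma sat_dep xs y (X : team M) : id_sat M X (dep xs y) <->
  forall s s', X s -> X s' -> (forall x, In x xs -> weak_agree s s' x) -> weak_agree s s' y.
Proof.
  unfold dep. simpl. split.
  - intros H s s' Hs Hs' Hag.
    assert (Hpair : id_sat M (fun t => t = s \/ t = s') (conj_dep xs)).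
    { apply sat_conj_dep. intros t t' [->| ->] [->| ->] x Hx d d' E E';
        try congruence; [|symmetry]; eapply Hag; eauto. }
    refine (H _ _ Hpair s s' (or_introl eq_refl) (or_intror eq_refl)).
    intros t [->| ->]; auto.
  - intros H Y HY HYd s s' Hs Hs'.
    rewrite sat_conj_dep in HYd. exact (H s s' (HY s Hs) (HY s' Hs') (HYd s s' Hs Hs')).
Qed.

Definition IAlls (xs : list nat) (p : idform Sg) : idform Sg := fold_right IAll p xs.

Fixpoint team_dups (X : team M) (xs : list nat) : team M :=
  match xs with [] => X | x :: xs => team_dups (team_dup X x) xs end.

Definition upd_all (s : assignment M) (xs : list nat) (h : nat -> dom M) : assignment M :=
  fun x => if in_dec Nat.eq_dec x xs then Some (h x) else s x.

Lemma upd_all_in s xs h x : In x xs -> upd_all s xs h x = Some (h x).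
Proof. unfold upd_all. destruct (in_dec Nat.eq_dec x xs); tauto. Qed.

Lemma upd_all_out s xs h x : ~ In x xs -> upd_all s xs h x = s x.
Proof. unfold upd_all. destruct (in_dec Nat.eq_dec x xs); tauto. Qed.

Lemma sat_IAlls xs : forall (X : team M) p,
  id_sat M X (IAlls xs p) <-> id_sat M (team_dups X xs) p.
Proof. induction xs as [|x xs IH]; simpl; [tauto|]. intros X p. apply IH. Qed.

Lemma team_dups_mem xs : forall (X : team M) t,
  team_dups X xs t <-> exists s h, X s /\ t = upd_all s xs h.
Proof.
  induction xs as [|x xs IH]; simpl; intros X t.
  - assert (Hnil : forall s h, upd_all s [] h = s) by reflexivity.
    destruct (dom_ne _ M) as [d]. split.
    + intros Ht. exists t, (fun _ => d). rewrite Hnil. auto.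
    + intros (s & h & Hs & ->). rewrite Hnil. exact Hs.
  - rewrite IH. split.
    + intros (s1 & h & (s & a & Hs & ->) & ->).
      exists s, (fun y => if in_dec Nat.eq_dec y xs then h y else a). split; auto.
      apply functional_extensionality. intro y. unfold upd_all, upd.
      destruct (in_dec Nat.eq_dec y xs), (in_dec Nat.eq_dec y (x :: xs)),
        (Nat.eqb_spec y x); simpl in *; subst; first [reflexivity | exfalso; intuition].
    + intros (s & h & Hs & ->). exists (upd s x (h x)), h.
      split; [exists s, (h x); auto|].
      apply functional_extensionality. intro y. unfold upd_all, upd.
      destruct (in_dec Nat.eq_dec y xs), (in_dec Nat.eq_dec y (x :: xs)),
        (Nat.eqb_spec y x); simpl in *; subst; first [reflexivity | exfalso; intuition].
Qed.

End TeamSemantics.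

(** * Second-order logic *)

Section SecondOrder.
Context {Sg : signature} (M : structure Sg).

Lemma tev_ext (v v' : nat -> dom M) (t : term Sg) :
  (forall x, tfv t x -> v x = v' x) -> tev v t = tev v' t.
Proof.
  induction t as [y|f a IH]; simpl; intros H.
  - apply H. reflexivity.
  - f_equal. apply functional_extensionality. intro j. apply IH.
    intros x Hx. apply H. eauto.
Qed.

Lemma so_holds_ext (p : soform Sg) : forall (v v' : nat -> dom M) (V V' : soval M),
  (forall x, sofv p x -> v x = v' x) ->
  (forall i k l, sofv2 p i k -> length l = k -> (V i k l <-> V' i k l)) ->
  so_holds M v V p <-> so_holds M v' V' p.
Proof.
  induction p as [t1 t2|r a|i args|p IH|p IHp q IHq|p IHp q IHq|x p IH|x p IH
                  |i k p IH|i k p IH]; simpl; intros v v' V V' Hv HV.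
  9-10: assert (E : forall R, so_holds M v (updV V i k R) p <-> so_holds M v' (updV V' i k R) p)
          by (intro R; apply IH; auto; intros j l ds Hjl Hds; unfold updV;
              destruct (Nat.eqb_spec j i), (Nat.eqb_spec l k); subst; simpl; try tauto;
              apply HV; auto; split; congruence);
        firstorder.
  7-8: assert (E : forall a, so_holds M (updv v x a) V p <-> so_holds M (updv v' x a) V' p)
         by (intro a; apply IH; auto; intros y Hy; unfold updv;
             destruct (Nat.eqb_spec y x); auto);
       firstorder.
  - rewrite (tev_ext v v' t1), (tev_ext v v' t2) by auto. tauto.
  - replace (fun j => tev v (a j)) with (fun j => tev v' (a j)); [tauto|].
    apply functional_extensionality. intro j. symmetry. apply tev_ext. eauto.
  - replace (map (tev v) args) with (map (tev v') args).
    + apply HV; [auto|]. apply length_map.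
    + apply map_ext_in. intros t Ht. symmetry. apply tev_ext. eauto.
  - rewrite (IH v v' V V'); tauto.
  - rewrite (IHp v v' V V'), (IHq v v' V V'); auto; tauto.
  - rewrite (IHp v v' V V'), (IHq v v' V V'); auto; tauto.
Qed.

Fixpoint so_matrix (p : soform Sg) : soform Sg :=
  match p with SAll2 _ _ q => so_matrix q | q => q end.

Lemma so_models_matrix (p : soform Sg) :
  so_models M p <-> forall v V, so_holds M v V (so_matrix p).
Proof.
  unfold so_models. induction p; simpl; try tauto.
  rewrite <- IHp. split; [|firstorder].
  intros H v V. specialize (H v V (V n n0)).
  replace (updV V n n0 (V n n0)) with V in H; [exact H|].
  apply functional_extensionality; intro i; apply functional_extensionality; intro k.
  unfold updV. destruct (Nat.eqb_spec i n), (Nat.eqb_spec k n0); subst; auto.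
Qed.

End SecondOrder.

Lemma is_fo_matrix {Sg} (p : soform Sg) : is_pi11 p -> is_fo (so_matrix p).
Proof. induction p; simpl; auto. Qed.

Lemma sofv_matrix {Sg} (p : soform Sg) x : sofv (so_matrix p) x -> sofv p x.
Proof. induction p; simpl; auto. Qed.

Section Occurrences.
Context {Sg : signature}.

Fixpoint sovars (p : soform Sg) (x : nat) : Prop :=
  match p with
  | SEq t1 t2 => tfv t1 x \/ tfv t2 x
  | SRel r args => exists j, tfv (args j) x
  | SVar i args => exists t, In t args /\ tfv t x
  | SNeg p | SAll2 _ _ p | SEx2 _ _ p => sovars p x
  | SAnd p q | SOr p q => sovars p x \/ sovars q x
  | SAll y p | SEx y p => x = y \/ sovars p x
  end.

Fixpoint fin_max (n : nat) : (Fin.t n -> nat) -> nat :=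
  match n with
  | 0 => fun _ => 0
  | S n => fun g => max (g Fin.F1) (fin_max n (fun j => g (Fin.FS j)))
  end.

Lemma le_fin_max n (g : Fin.t n -> nat) j : g j <= fin_max n g.
Proof.
  revert g. induction j as [n|n j IH]; intro g; simpl; [lia|].
  specialize (IH (fun j => g (Fin.FS j))). simpl in IH. lia.
Qed.

Fixpoint tbound (t : term Sg) : nat :=
  match t with
  | tvar y => S y
  | tapp f a => fin_max _ (fun j => tbound (a j))
  end.

Lemma tfv_lt_tbound t y : tfv t y -> y < tbound t.
Proof.
  induction t as [x|f a IH]; simpl.
  - lia.
  - intros [j Hj]. specialize (IH j Hj). pose proof (le_fin_max _ (fun j => tbound (a j)) j).
    simpl in *. lia.
Qed.

Fixpoint sobound (p : soform Sg) : nat :=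
  match p with
  | SEq t1 t2 => max (tbound t1) (tbound t2)
  | SRel r args => fin_max _ (fun j => tbound (args j))
  | SVar i args => list_max (map tbound args)
  | SNeg p | SAll2 _ _ p | SEx2 _ _ p => sobound p
  | SAnd p q | SOr p q => max (sobound p) (sobound q)
  | SAll y p | SEx y p => max (S y) (sobound p)
  end.

Lemma sovars_lt_sobound p x : sovars p x -> x < sobound p.
Proof.
  induction p; cbn [sovars sobound]; intros H; try (destruct H as [H|H]); try (apply IHp in H);
    try (apply IHp1 in H); try (apply IHp2 in H); try (apply tfv_lt_tbound in H); try lia.
  - destruct H as [j Hj]. apply tfv_lt_tbound in Hj.
    pose proof (le_fin_max _ (fun j => tbound (t j)) j). simpl in *. lia.
  - destruct H as [t [Ht Hx]]. apply tfv_lt_tbound in Hx.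
    assert (Hle : tbound t <= list_max (map tbound l)).
    { assert (Hall := proj1 (list_max_le (map tbound l) _) (le_n _)).
      rewrite Forall_forall in Hall. apply Hall, in_map, Ht. }
    lia.
Qed.

Fixpoint occs (p : soform Sg) : list (nat * nat) :=
  match p with
  | SVar i args => [(i, length args)]
  | SNeg q | SAll _ q | SEx _ q | SAll2 _ _ q | SEx2 _ _ q => occs q
  | SAnd q r | SOr q r => occs q ++ occs r
  | _ => []
  end.

Lemma sofv2_occs p i k : sofv2 p i k -> In (i, k) (occs p).
Proof.
  induction p; simpl; intros H; rewrite ?in_app_iff; try tauto.
  destruct H as [-> <-]. auto.
Qed.

End Occurrences.

(** * The translation *)

Definition rel_eq_dec (r r' : nat * nat) : {r = r'} + {r <> r'}.
Proof. decide equality; apply Nat.eq_dec. Defined.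

Definition setm (m : nat * nat -> bool) (r : nat * nat) : nat * nat -> bool :=
  fun r' => if rel_eq_dec r' r then true else m r'.

Section Translation.
Context {Sg : signature} (N : nat).

(* The variables of the translated formula lie below [N]; [uvar] splits teams for
   disjunctions and [cvar] holds the constant c.  Relation variable [r] owns the
   block above them made of its value [wvar r = zvar r 0] and its arguments
   [zvar r (S i)], i < arity. *)
Definition uvar := N.
Definition cvar := S N.
Definition lows := seq 0 (S N).
Definition zvar (r : nat * nat) (l : nat) := S (S N) + Cantor.to_nat (Cantor.to_nat r, l).
Definition wvar r := zvar r 0.
Definition zargs r := map (fun i => zvar r (S i)) (seq 0 (snd r)).

Fixpoint zeqs (r : nat * nat) (l : nat) (args : list (term Sg)) : idform Sg :=
  match args with
  | [] => itop
  | t :: ts => IAnd (IAtom (AEq (tvar (zvar r (S l))) t)) (zeqs r (S l) ts)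
  end.

Definition lit (pol : bool) (a : atom Sg) : idform Sg :=
  if pol then IAtom a else ineg (IAtom a).

Definition wc r : atom Sg := AEq (tvar (wvar r)) (tvar cvar).
Definition uc : atom Sg := AEq (tvar uvar) (tvar cvar).

(* The dependence atom lets the witness depend on the variables below [S N] only,
   not on the relation encoding. *)
Definition uniform_ex (x : nat) (p : idform Sg) : idform Sg :=
  IEx x (IAnd (dep (remove Nat.eq_dec x lows) x) p).

(* Split the team along [u = c] by a uniformly chosen [u]; the first disjunct [B]
   is needed on one-element structures, where [u <> c] is impossible. *)
Definition split_or (A B : idform Sg) : idform Sg :=
  IOr B (uniform_ex uvar (IAnd (IImp (IAtom uc) A) (IImp (ineg (IAtom uc)) B))).

Fixpoint tr (m : nat * nat -> bool) (pol : bool) (p : soform Sg) : idform Sg :=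
  match p with
  | SEq t1 t2 => lit pol (AEq t1 t2)
  | SRel r a => lit pol (ARel r a)
  | SVar i args =>
      let r := (i, length args) in
      if m r then IImp (zeqs r 0 args) (lit (negb pol) (wc r))
      else if pol then itop else IBot
  | SNeg q => tr m (negb pol) q
  | SAnd q q' => (if pol then IAnd else split_or) (tr m pol q) (tr m pol q')
  | SOr q q' => (if pol then split_or else IAnd) (tr m pol q) (tr m pol q')
  | SAll x q => (if pol then IAll x else uniform_ex x) (tr m pol q)
  | SEx x q => (if pol then uniform_ex x else IAll x) (tr m pol q)
  | SAll2 _ _ _ | SEx2 _ _ _ => itop
  end.

Fixpoint prefix (rs : list (nat * nat)) (m : nat * nat -> bool)
    (body : (nat * nat -> bool) -> idform Sg) : idform Sg :=
  match rs with
  | [] => body m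
  | r :: rs =>
      IOr (prefix rs m body)
        (IAlls (zargs r) (IEx (wvar r)
           (IAnd (dep (zargs r) (wvar r)) (prefix rs (setm m r) body))))
  end.

End Translation.

Lemma zvar_inj N r r' l l' : zvar N r l = zvar N r' l' -> r = r' /\ l = l'.
Proof.
  unfold zvar. intro E.
  assert (E' : Cantor.to_nat (Cantor.to_nat r, l) = Cantor.to_nat (Cantor.to_nat r', l')) by lia.
  apply Cantor.to_nat_inj in E'. injection E' as E1 ->.
  apply Cantor.to_nat_inj in E1. auto.
Qed.

Lemma zvar_high N r l : S (S N) <= zvar N r l.
Proof. unfold zvar. lia. Qed.

Section Encoding.
Context {Sg : signature} (M : structure Sg) (N : nat) (c0 : dom M).

(* Reads only the variables of the translated formula, [c0] being a junk value;
   in particular it ignores [uvar]. *)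
Definition valuation (s : assignment M) : nat -> dom M :=
  fun y => if y <? N then match s y with Some d => d | None => c0 end else c0.

Definition ztuple (r : nat * nat) (ds : list (dom M)) (g : assignment M) : Prop :=
  forall i d, nth_error ds i = Some d -> g (zvar N r (S i)) = Some d.

Definition functional_on (r : nat * nat) (X : team M) : Prop :=
  forall g g', X g -> X g' ->
  (forall i, i < snd r -> g (zvar N r (S i)) = g' (zvar N r (S i))) ->
  g (wvar N r) = g' (wvar N r).

Definition total_on (r : nat * nat) (X : team M) : Prop :=
  forall ds, length ds = snd r -> exists g, X g /\ ztuple r ds g.

Definition decode_rel (m : nat * nat -> bool) (X : team M) (r : nat * nat)
    (ds : list (dom M)) : Prop :=
  if m r then forall g, X g -> ztuple r ds g -> g (wvar N r) <> Some c0 else True.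

Definition decode (m : nat * nat -> bool) (X : team M) : soval M :=
  fun i k => decode_rel m X (i, k).

End Encoding.

(** * Evaluation on saturated teams *)

Definition signed (pol : bool) (P : Prop) : Prop := if pol then P else ~ P.

Lemma signed_negb pol P : signed (negb pol) P <-> signed pol (~ P).
Proof. destruct pol; simpl; split; auto. apply NNPP. Qed.

Section FirstOrderLevel.
Context {Sg : signature} (M : structure Sg) (N : nat) (c0 : dom M).
Variables (G : team M) (m : nat * nat -> bool).
Hypothesis G_cvar : forall g, G g -> g (cvar N) = Some c0.
Hypothesis G_functional : forall r, m r = true -> functional_on M N r G.
Hypothesis G_total : forall r, m r = true -> total_on M N r G.

Notation val := (valuation M N c0).

Definition glue (s g : assignment M) : assignment M :=
  fun x => if x <? S N then s x else g x.

(* [X] consists of the combinations of a valuation of the variables below [S N]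
   with a point of [G], and contains all of them. *)
Definition saturated (X : team M) : Prop :=
  (forall s, X s -> forall y, y < S N -> s y <> None) /\
  (forall s, X s -> exists g, G g /\ s = glue s g) /\
  (forall s g, X s -> G g -> X (glue s g)).

Lemma glue_low s g x : x < S N -> glue s g x = s x.
Proof. unfold glue. intro H. apply Nat.ltb_lt in H. rewrite H. reflexivity. Qed.

Lemma glue_high s g x : S N <= x -> glue s g x = g x.
Proof.
  unfold glue. intro H. destruct (Nat.ltb_spec x (S N)); [lia|reflexivity].
Qed.

Lemma glue_upd s g x a : x < S N -> glue (upd s x a) g = upd (glue s g) x a.
Proof.
  intro Hx. apply functional_extensionality. intro y. unfold glue, upd.
  destruct (Nat.eqb_spec y x) as [->|]; [|reflexivity].
  apply Nat.ltb_lt in Hx. rewrite Hx. reflexivity.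
Qed.

Lemma val_ext s s' : (forall y, y < N -> s y = s' y) -> val s = val s'.
Proof.
  intro H. apply functional_extensionality. intro y. unfold valuation.
  destruct (Nat.ltb_spec y N); [rewrite H|]; auto.
Qed.

Lemma val_glue s g : val (glue s g) = val s.
Proof. apply val_ext. intros y Hy. apply glue_low. lia. Qed.

Lemma val_upd s x a : x < N -> val (upd s x a) = updv (val s) x a.
Proof.
  intro Hx. apply functional_extensionality. intro y. unfold valuation, upd, updv.
  destruct (Nat.eqb_spec y x) as [->|]; [|reflexivity].
  destruct (Nat.ltb_spec x N); [reflexivity|lia].
Qed.

Lemma val_upd_uvar s a : val (upd s (uvar N) a) = val s.
Proof.
  apply val_ext. intros y Hy. unfold upd, uvar. destruct (Nat.eqb_spec y N); [lia|reflexivity].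
Qed.

Lemma saturated_cvar X s : saturated X -> X s -> s (cvar N) = Some c0.
Proof.
  intros (_ & HG & _) Hs. destruct (HG s Hs) as (g & Hg & ->).
  rewrite glue_high by (unfold cvar; lia). auto.
Qed.

Lemma teval_val s t d : (forall y, y < S N -> s y <> None) ->
  (forall y, tfv t y -> y < N) -> teval s t d <-> d = tev (val s) t.
Proof.
  intros Hdef. revert d. induction t as [y|f a IH]; simpl; intros d Ht.
  - specialize (Ht y eq_refl). unfold valuation.
    destruct (Nat.ltb_spec y N); [|lia].
    specialize (Hdef y ltac:(lia)). destruct (s y); [split; congruence|congruence].
  - assert (IHa : forall j d, teval s (a j) d <-> d = tev (val s) (a j))
      by (intros j d'; apply IH; intros y Hy; apply Ht; eauto).
    split.
    + intros (ds & Hds & ->). f_equal. apply functional_extensionality. intro j. apply IHa, Hds.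
    + intros ->. exists (fun j => tev (val s) (a j)). split; [intro j; apply IHa|]; reflexivity.
Qed.

Lemma saturated_dup X x : x < S N -> saturated X -> saturated (team_dup X x).
Proof.
  intros Hx (Hdef & HG & Hglue). split; [|split].
  - intros t (s & a & Hs & ->) y Hy. unfold upd.
    destruct (Nat.eqb_spec y x); [congruence|auto].
  - intros t (s & a & Hs & ->). destruct (HG s Hs) as (g & Hg & Hsg).
    exists g. split; auto. rewrite glue_upd, <- Hsg by auto. reflexivity.
  - intros t g (s & a & Hs & ->) Hg. rewrite glue_upd by auto.
    exists (glue s g), a. auto.
Qed.

Definition glue_invariant (X : team M) (F : assignment M -> dom M) : Prop :=
  forall s g, X s -> G g -> F (glue s g) = F s.

Lemma saturated_supp X F x : x < S N -> saturated X -> glue_invariant X F ->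
  saturated (team_supp X F x).
Proof.
  intros Hx (Hdef & HG & Hglue) HF. split; [|split].
  - intros t (s & Hs & ->) y Hy. unfold upd.
    destruct (Nat.eqb_spec y x); [congruence|auto].
  - intros t (s & Hs & ->). destruct (HG s Hs) as (g & Hg & Hsg).
    exists g. split; auto. rewrite glue_upd, <- Hsg by auto. reflexivity.
  - intros t g (s & Hs & ->) Hg. rewrite glue_upd by auto.
    exists (glue s g). rewrite HF; auto.
Qed.

Lemma saturated_restrict X (P : assignment M -> Prop) : saturated X ->
  (forall s g, X s -> G g -> P s -> P (glue s g)) -> saturated (fun s => X s /\ P s).
Proof.
  intros (Hdef & HG & Hglue) HP. split; [|split].
  - intros s [Hs _]. auto.
  - intros s [Hs _]. auto.
  - intros s g [Hs Ps] Hg. auto.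
Qed.

Definition agree_except (x : nat) (s s' : assignment M) : Prop :=
  forall y, y < S N -> y <> x -> s y = s' y.

Lemma sat_uniform_dep X F x : saturated X -> x < S N ->
  id_sat M (team_supp X F x) (dep (remove Nat.eq_dec x (lows N)) x) <->
  forall s s', X s -> X s' -> agree_except x s s' -> F s = F s'.
Proof.
  intros [Hdef _] Hx. rewrite sat_dep.
  assert (Hlows : forall y, In y (remove Nat.eq_dec x (lows N)) <-> y < S N /\ y <> x).
  { intro y. unfold lows. split.
    - intros H. apply in_remove in H. rewrite in_seq in H. lia.
    - intros [Hy Hyx]. apply in_in_remove; auto. apply in_seq. lia. }
  split.
  - intros H s s' Hs Hs' Hag.
    refine (H (upd s x (F s)) (upd s' x (F s')) ltac:(exists s; auto) ltac:(exists s'; auto) _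
              (F s) (F s') _ _); unfold upd; rewrite ?Nat.eqb_refl; auto.
    intros y Hy d d' E E'. apply Hlows in Hy. destruct (Nat.eqb_spec y x); [lia|].
    rewrite Hag in E by tauto. congruence.
  - intros H t t' (s & Hs & ->) (s' & Hs' & ->) Hag d d' E E'.
    unfold upd in E, E'. rewrite Nat.eqb_refl in E, E'.
    enough (F s = F s') by congruence. apply H; auto. intros y Hy Hyx.
    specialize (Hag y (proj2 (Hlows y) (conj Hy Hyx))).
    unfold weak_agree, upd in Hag. destruct (Nat.eqb_spec y x); [congruence|].
    exact (proj1 (weak_agree_defined M s s' y (Hdef s Hs y Hy) (Hdef s' Hs' y Hy)) Hag).
Qed.

Lemma uniform_glue_invariant X F x : saturated X -> x < S N ->
  (forall s s', X s -> X s' -> agree_except x s s' -> F s = F s') -> glue_invariant X F.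
Proof.
  intros HX Hx HF s g Hs Hg. apply HF; auto; [apply HX; auto|].
  intros y Hy _. apply glue_low, Hy.
Qed.

Lemma eq_cvar_holds X s x : saturated X -> X s ->
  atom_holds s (AEq (tvar x) (tvar (cvar N))) <-> s x = Some c0.
Proof.
  intros HX Hs. simpl. rewrite (saturated_cvar X s HX Hs).
  split; [intros (d & E & [=<-]); auto|intros E; eauto].
Qed.

Definition expresses (p : idform Sg) (Q : (nat -> dom M) -> Prop) : Prop :=
  forall X, saturated X -> id_sat M X p <-> forall s, X s -> Q (val s).

Lemma expresses_ext p Q Q' : (forall v, Q v <-> Q' v) -> expresses p Q -> expresses p Q'.
Proof. intros HQ Hp X HX. rewrite (Hp X HX). firstorder. Qed.

Lemma expresses_flat p P Q : flat M p P ->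
  (forall X s, saturated X -> X s -> P s <-> Q (val s)) -> expresses p Q.
Proof. intros Hp HPQ X HX. rewrite (Hp X). firstorder. Qed.

Lemma expresses_and A B QA QB : expresses A QA -> expresses B QB ->
  expresses (IAnd A B) (fun v => QA v /\ QB v).
Proof. intros HA HB X HX. simpl. rewrite (HA X HX), (HB X HX). firstorder. Qed.

Lemma expresses_all x A Q : x < N -> expresses A Q ->
  expresses (IAll x A) (fun v => forall a, Q (updv v x a)).
Proof.
  intros Hx HA X HX. simpl. rewrite (HA (team_dup X x)) by (apply saturated_dup; auto; lia). split.
  - intros H s Hs a. rewrite <- val_upd by auto. apply H. exists s, a. auto.
  - intros H t (s & a & Hs & ->). rewrite val_upd by auto. auto.
Qed.

Lemma sat_uniform_ex X x p : id_sat M X (uniform_ex N x p) <->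
  exists F, id_sat M (team_supp X F x) (dep (remove Nat.eq_dec x (lows N)) x) /\
            id_sat M (team_supp X F x) p.
Proof. reflexivity. Qed.

Lemma expresses_uniform_ex x A Q : x < N -> expresses A Q ->
  expresses (uniform_ex N x A) (fun v => exists a, Q (updv v x a)).
Proof.
  intros Hx HA X HX. rewrite sat_uniform_ex. split.
  - intros (F & HD & HFA). rewrite sat_uniform_dep in HD by (auto; lia).
    rewrite (HA (team_supp X F x)) in HFA
      by (apply saturated_supp, (uniform_glue_invariant X F x); auto; lia).
    intros s Hs. exists (F s). rewrite <- val_upd by auto. apply HFA. exists s. auto.
  - intros H.
    set (F := fun s => epsilon (inhabits c0) (fun a => Q (updv (val s) x a))).
    assert (HF : forall s s', X s -> X s' -> agree_except x s s' -> F s = F s').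
    { intros s s' _ _ Hag. unfold F. f_equal. apply functional_extensionality. intro a.
      f_equal. apply functional_extensionality. intro y. unfold valuation, updv.
      destruct (Nat.eqb_spec y x); [reflexivity|].
      destruct (Nat.ltb_spec y N); [rewrite Hag by lia|]; reflexivity. }
    exists F. rewrite sat_uniform_dep by (auto; lia). split; [exact HF|].
    rewrite (HA (team_supp X F x))
      by (apply saturated_supp, (uniform_glue_invariant X F x); auto; lia).
    intros t (s & Hs & ->). rewrite val_upd by auto. apply epsilon_spec, H, Hs.
Qed.

Lemma val_one_point s s' : (forall d : dom M, d = c0) -> val s = val s'.
Proof.
  intro H. apply functional_extensionality. intro y. rewrite (H (val s y)). auto.
Qed.

Lemma sat_uc_branches X F A B QA QB : expresses A QA -> expresses B QB ->
  saturated X -> glue_invariant X F ->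
  id_sat M (team_supp X F (uvar N))
    (IAnd (IImp (IAtom (uc N)) A) (IImp (ineg (IAtom (uc N))) B)) <->
  forall s, X s -> (F s = c0 -> QA (val s)) /\ (F s <> c0 -> QB (val s)).
Proof.
  intros HA HB HX HF.
  set (T := team_supp X F (uvar N)).
  assert (HT : saturated T) by (apply saturated_supp; auto; unfold uvar; lia).
  assert (Huc : forall t, T t -> atom_holds t (uc N) <-> t (uvar N) = Some c0)
    by (intros t Ht; apply (eq_cvar_holds T); auto).
  assert (Hglue : forall t g, T t -> G g -> glue t g (uvar N) = t (uvar N))
    by (intros; apply glue_low; unfold uvar; lia).
  rewrite sat_and, (sat_imp_flat M _ _ _ _ (flat_atom M (uc N))),
    (sat_imp_flat M _ _ _ _ (flat_neg M _ _ (flat_atom M (uc N)))).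
  rewrite (HA (fun t => T t /\ atom_holds t (uc N))), (HB (fun t => T t /\ ~ atom_holds t (uc N))).
  2, 3: apply saturated_restrict; auto; intros t g Ht Hg;
    rewrite !Huc, Hglue by (auto; apply HT; auto); auto.
  assert (Hupd : forall s, upd s (uvar N) (F s) (uvar N) = Some (F s))
    by (intro s; unfold upd; rewrite Nat.eqb_refl; auto).
  split.
  - intros [HA' HB'] s Hs. rewrite <- (val_upd_uvar s (F s)).
    assert (Ht : T (upd s (uvar N) (F s))) by (exists s; auto).
    split; intro E; [apply HA'|apply HB']; rewrite Huc, Hupd by auto; split; congruence.
  - intros H. split; intros t [(s & Hs & ->) Hu]; rewrite Huc, Hupd in Hu by (exists s; auto);
      rewrite val_upd_uvar; apply H; congruence.
Qed.

Lemma expresses_split_or A B QA QB : expresses A QA -> expresses B QB ->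
  expresses (split_or N A B) (fun v => QA v \/ QB v).
Proof.
  intros HA HB X HX. unfold split_or. rewrite sat_or, sat_uniform_ex, (HB X HX).
  assert (Hu : uvar N < S N) by (unfold uvar; lia).
  split.
  - intros [H | (F & HD & H)]; [firstorder|].
    rewrite sat_uniform_dep in HD by auto.
    rewrite sat_uc_branches in H by eauto using uniform_glue_invariant.
    intros s Hs. destruct (classic (F s = c0)); [left|right]; apply H; auto.
  - intros H. destruct (classic (forall s, X s -> QB (val s))) as [HQB|HnQB]; [left; auto|right].
    apply not_all_ex_not in HnQB. destruct HnQB as [s0 Hs0].
    apply imply_to_and in Hs0. destruct Hs0 as [Hs0 HnB0].
    assert (HA0 : QA (val s0)) by (destruct (H s0 Hs0); tauto).
    (* On a one-element structure [d1 = c0], but then [QA] holds everywhere as it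
       holds at [s0]. *)
    set (d1 := epsilon (inhabits c0) (fun d => d <> c0)).
    set (F := fun s => if excluded_middle_informative (QA (val s)) then c0 else d1).
    assert (HF : forall s s', X s -> X s' -> agree_except (uvar N) s s' -> F s = F s').
    { intros s s' _ _ Hag. unfold F. rewrite (val_ext s s'); auto.
      intros y Hy. apply Hag; unfold uvar; lia. }
    exists F. rewrite sat_uniform_dep, sat_uc_branches by eauto using uniform_glue_invariant.
    split; [exact HF|]. intros s Hs. unfold F.
    destruct (excluded_middle_informative (QA (val s))) as [HQA|HnQA];
      split; intro E; try tauto.
    + exfalso. apply HnQA. rewrite (val_one_point s s0); auto.
      intro d. apply NNPP. intro Hd.
      exact (epsilon_spec (inhabits c0) (fun d => d <> c0) (ex_intro _ d Hd) E).
    + destruct (H s Hs); tauto.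
Qed.

Definition atom_so (a : atom Sg) : soform Sg :=
  match a with AEq t1 t2 => SEq t1 t2 | ARel r args => SRel r args end.

Lemma expresses_lit pol a V : (forall y, afv a y -> y < N) ->
  expresses (lit pol a) (fun v => signed pol (so_holds M v V (atom_so a))).
Proof.
  intros Ha. apply (expresses_flat _ (fun s => signed pol (atom_holds s a))).
  { destruct pol; [apply flat_atom|apply flat_neg, flat_atom]. }
  intros X s [Hdef _] Hs.
  enough (E : atom_holds s a <-> so_holds M (val s) V (atom_so a)) by (destruct pol; simpl; tauto).
  assert (Hval : forall t d, (forall y, tfv t y -> y < N) -> teval s t d <-> d = tev (val s) t)
    by (intros; apply teval_val; auto).
  destruct a as [t1 t2|r args]; simpl in *.
  - split.
    + intros (d & E1 & E2).
      rewrite Hval in E1, E2 by (intros y Hy; apply Ha; auto). congruence.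
    + intros E. exists (tev (val s) t1).
      rewrite !Hval by (intros y Hy; apply Ha; auto). auto.
  - split.
    + intros (ds & Hds & HR). replace (fun j => tev (val s) (args j)) with ds; auto.
      apply functional_extensionality. intro j. apply (Hval (args j)); eauto.
    + intros HR. exists (fun j => tev (val s) (args j)). split; auto.
      intro j. apply (Hval (args j)); eauto.
Qed.

Lemma flat_zeqs r l args : flat M (zeqs N r l args)
  (fun s => forall i t, nth_error args i = Some t ->
     atom_holds s (AEq (tvar (zvar N r (S (l + i)))) t)).
Proof.
  revert l. induction args as [|t args IH]; intro l; simpl.
  - apply (flat_ext _ _ _ _ (flat_top M)). intro s. split; [intros _ [|i] t' [=]|auto].
  - apply (flat_ext _ _ _ _ (flat_and M _ _ _ _ (flat_atom M _) (IH (S l)))).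
    intro s. split.
    + intros [H0 H] [|i] t' E; simpl in E.
      * injection E as <-. rewrite Nat.add_0_r. exact H0.
      * rewrite Nat.add_succ_r. exact (H i t' E).
    + intros H. split.
      * specialize (H 0 t eq_refl). rewrite Nat.add_0_r in H. exact H.
      * intros i t' E. specialize (H (S i) t' E). rewrite Nat.add_succ_r in H. exact H.
Qed.

Lemma zeqs_ztuple s r args : (forall y, y < S N -> s y <> None) ->
  (forall t, In t args -> forall y, tfv t y -> y < N) ->
  (forall i t, nth_error args i = Some t -> atom_holds s (AEq (tvar (zvar N r (S (0 + i)))) t)) <->
  ztuple M N r (map (tev (val s)) args) s.
Proof.
  intros Hdef Hargs. unfold ztuple. simpl.
  assert (Hval : forall i t d, nth_error args i = Some t -> teval s t d <-> d = tev (val s) t)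
    by (intros i t d Et; apply teval_val; eauto using nth_error_In).
  split.
  - intros H i d E. rewrite nth_error_map in E.
    destruct (nth_error args i) as [t|] eqn:Et; [|discriminate]. injection E as <-.
    destruct (H i t Et) as (d & E1 & E2). rewrite (Hval i t d Et) in E2. congruence.
  - intros H i t Et. exists (tev (val s) t). split.
    + apply H. rewrite nth_error_map, Et. reflexivity.
    + apply (Hval i); auto.
Qed.

Lemma sat_imp_zeqs X r args q Q : saturated X ->
  (forall t, In t args -> forall y, tfv t y -> y < N) -> flat M q Q ->
  id_sat M X (IImp (zeqs N r 0 args) q) <->
  forall s, X s -> ztuple M N r (map (tev (val s)) args) s -> Q s.
Proof.
  intros [Hdef _] Hargs Hq. rewrite (flat_imp M _ _ _ _ (flat_zeqs r 0 args) Hq X).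
  split; intros H s Hs; specialize (H s Hs);
    [rewrite <- zeqs_ztuple|rewrite zeqs_ztuple]; auto.
Qed.

Lemma saturated_forall_glue X (P : assignment M -> Prop) : saturated X ->
  (forall s, X s -> P s) <-> (forall s g, X s -> G g -> P (glue s g)).
Proof.
  intros (_ & HG & Hglue). split; [auto|].
  intros H s Hs. destruct (HG s Hs) as (g & Hg & ->). auto.
Qed.

Lemma ztuple_glue r ds s g : ztuple M N r ds (glue s g) <-> ztuple M N r ds g.
Proof.
  unfold ztuple. setoid_rewrite glue_high; [reflexivity|].
  intros. pose proof (zvar_high N r (S i)). lia.
Qed.

Lemma glue_wvar r s g : glue s g (wvar N r) = g (wvar N r).
Proof. apply glue_high. pose proof (zvar_high N r 0). unfold wvar. lia. Qed.

Lemma not_decode_rel r ds : m r = true -> length ds = snd r ->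
  ~ decode_rel M N c0 m G r ds <-> forall g, G g -> ztuple M N r ds g -> g (wvar N r) = Some c0.
Proof.
  intros Hm Hds. unfold decode_rel. rewrite Hm. split.
  - intros H g Hg Hz. apply not_all_ex_not in H. destruct H as [g0 H].
    apply imply_to_and in H. destruct H as [Hg0 H].
    apply imply_to_and in H. destruct H as [Hz0 Hw0]. apply NNPP in Hw0.
    rewrite <- Hw0. apply (G_functional r Hm); auto.
    intros l Hl. rewrite <- Hds in Hl. apply nth_error_Some in Hl.
    destruct (nth_error ds l) as [d|] eqn:El; [|congruence].
    rewrite (Hz l d El), (Hz0 l d El). reflexivity.
  - intros H Hdec. destruct (G_total r Hm ds Hds) as (g & Hg & Hz).
    exact (Hdec g Hg Hz (H g Hg Hz)).
Qed.

Lemma sat_rel_pos X r args : m r = true -> saturated X ->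
  (forall t, In t args -> forall y, tfv t y -> y < N) ->
  id_sat M X (IImp (zeqs N r 0 args) (ineg (IAtom (wc N r)))) <->
  forall s, X s -> decode_rel M N c0 m G r (map (tev (val s)) args).
Proof.
  intros Hm HX Hargs. unfold decode_rel. rewrite Hm.
  rewrite (sat_imp_zeqs X r args _ _ HX Hargs (flat_neg M _ _ (flat_atom M _))).
  rewrite !(saturated_forall_glue X) by auto. setoid_rewrite val_glue. split.
  - intros H s g0 Hs _ g Hg Hz Hw. apply (H s g Hs Hg).
    + rewrite ztuple_glue. exact Hz.
    + apply (eq_cvar_holds X); [auto|apply HX; auto|]. rewrite glue_wvar. exact Hw.
  - intros H s g Hs Hg Hz Hw. rewrite ztuple_glue in Hz.
    apply (H s g Hs Hg g Hg Hz). rewrite <- (glue_wvar r s g).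
    apply (eq_cvar_holds X); auto. apply HX; auto.
Qed.

Lemma sat_rel_neg X r args : m r = true -> length args = snd r -> saturated X ->
  (forall t, In t args -> forall y, tfv t y -> y < N) ->
  id_sat M X (IImp (zeqs N r 0 args) (IAtom (wc N r))) <->
  forall s, X s -> ~ decode_rel M N c0 m G r (map (tev (val s)) args).
Proof.
  intros Hm Hlen HX Hargs.
  rewrite (sat_imp_zeqs X r args _ _ HX Hargs (flat_atom M _)).
  setoid_rewrite not_decode_rel; [|auto|rewrite length_map; auto].
  rewrite !(saturated_forall_glue X) by auto. setoid_rewrite val_glue. split.
  - intros H s g0 Hs _ g Hg Hz. rewrite <- (glue_wvar r s g).
    apply (eq_cvar_holds X); [auto|apply HX; auto|].
    apply H; auto. rewrite ztuple_glue. exact Hz.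
  - intros H s g Hs Hg Hz. apply (eq_cvar_holds X); [auto|apply HX; auto|].
    rewrite ztuple_glue in Hz. rewrite glue_wvar. apply (H s g); auto.
Qed.

Lemma expresses_rel pol i args : (forall t, In t args -> forall y, tfv t y -> y < N) ->
  expresses (tr N m pol (SVar i args))
    (fun v => signed pol (so_holds M v (decode M N c0 m G) (SVar i args))).
Proof.
  intros Hargs X HX. cbn [tr so_holds]. unfold decode.
  destruct (m (i, length args)) eqn:Hm.
  - destruct pol; [apply sat_rel_pos|apply sat_rel_neg]; auto.
  - unfold decode_rel. rewrite Hm. destruct pol; simpl; firstorder.
Qed.

Lemma expresses_tr p : is_fo p -> (forall x, sovars p x -> x < N) -> forall pol,
  expresses (tr N m pol p) (fun v => signed pol (so_holds M v (decode M N c0 m G) p)).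
Proof.
  induction p as [t1 t2|r a|i args|q IH|q IHq q' IHq'|q IHq q' IHq'|x q IH|x q IH
                  |i k q IH|i k q IH]; cbn [is_fo sovars]; intros Hfo Hvars pol.
  - exact (expresses_lit pol (AEq t1 t2) _ Hvars).
  - exact (expresses_lit pol (ARel r a) _ Hvars).
  - apply expresses_rel. intros t Ht y Hy. apply Hvars. eauto.
  - eapply expresses_ext; [|apply IH; auto]. intro v. apply signed_negb.
  - destruct Hfo as [Hq Hq'].
    assert (IH1 := IHq Hq (fun x H => Hvars x (or_introl H)) pol).
    assert (IH2 := IHq' Hq' (fun x H => Hvars x (or_intror H)) pol).
    destruct pol; cbn [tr]; eapply expresses_ext;
      [|apply expresses_and; eauto| |apply expresses_split_or; eauto];
      intro v; simpl; [tauto|]. split; [tauto|apply not_and_or].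
  - destruct Hfo as [Hq Hq'].
    assert (IH1 := IHq Hq (fun x H => Hvars x (or_introl H)) pol).
    assert (IH2 := IHq' Hq' (fun x H => Hvars x (or_intror H)) pol).
    destruct pol; cbn [tr]; eapply expresses_ext;
      [|apply expresses_split_or; eauto| |apply expresses_and; eauto];
      intro v; simpl; tauto.
  - assert (Hx : x < N) by (apply Hvars; auto).
    assert (IHq := IH Hfo (fun y H => Hvars y (or_intror H)) pol).
    destruct pol; cbn [tr]; eapply expresses_ext;
      [|apply expresses_all; eauto| |apply expresses_uniform_ex; eauto];
      intro v; simpl; [tauto|]. split; [firstorder|apply not_all_ex_not].
  - assert (Hx : x < N) by (apply Hvars; auto).
    assert (IHq := IH Hfo (fun y H => Hvars y (or_intror H)) pol).
    destruct pol; cbn [tr]; eapply expresses_ext;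
      [|apply expresses_uniform_ex; eauto| |apply expresses_all; eauto];
      intro v; simpl; firstorder.
  - destruct Hfo.
  - destruct Hfo.
Qed.

End FirstOrderLevel.

(** * Choosing the relations *)

Section RelationBlocks.
Context {Sg : signature} (M : structure Sg) (N : nat) (c0 : dom M).

Lemma in_zargs r x : In x (zargs N r) <-> exists i, i < snd r /\ x = zvar N r (S i).
Proof.
  unfold zargs. rewrite in_map_iff. split.
  - intros (i & <- & Hi). apply in_seq in Hi. exists i. split; [lia|auto].
  - intros (i & Hi & ->). exists i. split; auto. apply in_seq. lia.
Qed.

Lemma zvar_other_block r r' l l' : r' <> r -> zvar N r' l' <> zvar N r l.
Proof. intros Hr E. apply zvar_inj in E. tauto. Qed.

Definition agree_off (r : nat * nat) (t s : assignment M) : Prop :=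
  forall x, (forall l, x <> zvar N r l) -> t x = s x.

Definition offblock (r : nat * nat) (X T : team M) : Prop :=
  (forall t, T t -> exists s, X s /\ agree_off r t s) /\
  (forall s, X s -> exists t, T t /\ agree_off r t s).

Lemma agree_off_other r r' t s l : r' <> r -> agree_off r t s ->
  t (zvar N r' l) = s (zvar N r' l).
Proof. intros Hr H. apply H. intros l'. apply zvar_other_block, Hr. Qed.

Lemma agree_off_ztuple r r' t s ds : r' <> r -> agree_off r t s ->
  ztuple M N r' ds t <-> ztuple M N r' ds s.
Proof.
  intros Hr H. unfold ztuple. setoid_rewrite (agree_off_other r r' t s); auto. reflexivity.
Qed.

Lemma offblock_cvar r X T : offblock r X T ->
  (forall s, X s -> s (cvar N) = Some c0) -> forall t, T t -> t (cvar N) = Some c0.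
Proof.
  intros [HT _] HX t Ht. destruct (HT t Ht) as (s & Hs & Hag).
  rewrite Hag; auto. intros l. pose proof (zvar_high N r l). unfold cvar. lia.
Qed.

Lemma offblock_functional r r' X T : r' <> r -> offblock r X T ->
  functional_on M N r' X -> functional_on M N r' T.
Proof.
  intros Hr [HT _] HX t t' Ht Ht' Hz.
  destruct (HT t Ht) as (s & Hs & Hag), (HT t' Ht') as (s' & Hs' & Hag').
  unfold wvar. rewrite !(agree_off_other r r' _ _ _ Hr Hag), !(agree_off_other r r' _ _ _ Hr Hag').
  apply HX; auto. intros i Hi.
  rewrite <- (agree_off_other r r' _ _ _ Hr Hag), <- (agree_off_other r r' _ _ _ Hr Hag'). auto.
Qed.

Lemma offblock_total r r' X T : r' <> r -> offblock r X T ->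
  total_on M N r' X -> total_on M N r' T.
Proof.
  intros Hr [_ HX] Htot ds Hds. destruct (Htot ds Hds) as (s & Hs & Hz).
  destruct (HX s Hs) as (t & Ht & Hag). exists t. split; auto.
  rewrite (agree_off_ztuple r r' t s); auto.
Qed.

Lemma offblock_decode m r r' X T ds : r' <> r -> offblock r X T ->
  decode_rel M N c0 m X r' ds <-> decode_rel M N c0 m T r' ds.
Proof.
  intros Hr [HT HX]. unfold decode_rel. destruct (m r'); [|tauto]. unfold wvar. split.
  - intros H t Ht Hz. destruct (HT t Ht) as (s & Hs & Hag).
    rewrite (agree_off_other r r' t s) by auto.
    apply H; auto. rewrite <- (agree_off_ztuple r r' t s); auto.
  - intros H s Hs Hz. destruct (HX s Hs) as (t & Ht & Hag).
    rewrite <- (agree_off_other r r' t s) by auto.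
    apply H; auto. rewrite (agree_off_ztuple r r' t s); auto.
Qed.

Definition extend_rel (X : team M) (r : nat * nat) (F : assignment M -> dom M) : team M :=
  team_supp (team_dups M X (zargs N r)) F (wvar N r).

Definition ext (r : nat * nat) (F : assignment M -> dom M) (s : assignment M)
    (h : nat -> dom M) : assignment M :=
  upd (upd_all M s (zargs N r) h) (wvar N r) (F (upd_all M s (zargs N r) h)).

Lemma extend_rel_mem X r F t :
  extend_rel X r F t <-> exists s h, X s /\ t = ext r F s h.
Proof.
  unfold extend_rel. split.
  - intros (s1 & Hs1 & ->). apply team_dups_mem in Hs1.
    destruct Hs1 as (s & h & Hs & ->). exists s, h. auto.
  - intros (s & h & Hs & ->). eexists. split; [|reflexivity]. apply team_dups_mem. eauto.
Qed.

Lemma ext_off r F s h x : (forall l, x <> zvar N r l) -> ext r F s h x = s x.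
Proof.
  intros Hx. unfold ext, upd. destruct (Nat.eqb_spec x (wvar N r)); [exfalso; eapply Hx; eauto|].
  apply upd_all_out. rewrite in_zargs. intros (i & _ & E). eapply Hx; eauto.
Qed.

Lemma ext_arg r F s h i : i < snd r ->
  ext r F s h (zvar N r (S i)) = Some (h (zvar N r (S i))).
Proof.
  intros Hi. unfold ext, upd.
  destruct (Nat.eqb_spec (zvar N r (S i)) (wvar N r)) as [E|].
  - apply zvar_inj in E. lia.
  - apply upd_all_in, in_zargs. eauto.
Qed.

Lemma ext_w r F s h : ext r F s h (wvar N r) = Some (F (upd_all M s (zargs N r) h)).
Proof. unfold ext, upd. rewrite Nat.eqb_refl. reflexivity. Qed.

Lemma extend_rel_offblock X r F : offblock r X (extend_rel X r F).
Proof.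
  split.
  - intros t Ht. apply extend_rel_mem in Ht. destruct Ht as (s & h & Hs & ->).
    exists s. split; auto. intros x Hx. apply ext_off, Hx.
  - intros s Hs. exists (ext r F s (fun _ => c0)). split.
    + apply extend_rel_mem. eauto.
    + intros x Hx. apply ext_off, Hx.
Qed.

Lemma sat_dep_zargs X r F :
  id_sat M (extend_rel X r F) (dep (zargs N r) (wvar N r)) <->
  functional_on M N r (extend_rel X r F).
Proof.
  assert (Hdef : forall t x, extend_rel X r F t -> In x (wvar N r :: zargs N r) -> t x <> None).
  { intros t x Ht Hx. apply extend_rel_mem in Ht. destruct Ht as (s & h & _ & ->).
    destruct Hx as [<-|Hx]; [rewrite ext_w; discriminate|].
    apply in_zargs in Hx. destruct Hx as (i & Hi & ->). rewrite ext_arg by auto. discriminate. }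
  assert (Hag : forall t t' x, extend_rel X r F t -> extend_rel X r F t' ->
    In x (wvar N r :: zargs N r) -> weak_agree M t t' x <-> t x = t' x)
    by (intros; apply weak_agree_defined; eauto).
  rewrite sat_dep. split.
  - intros H t t' Ht Ht' Hz. apply Hag; auto; [left; auto|].
    apply H; auto. intros x Hx. apply Hag; auto; [right; auto|].
    apply in_zargs in Hx. destruct Hx as (i & Hi & ->). auto.
  - intros H t t' Ht Ht' Hz. apply Hag; auto; [left; auto|].
    apply H; auto. intros i Hi.
    assert (Hx : In (zvar N r (S i)) (zargs N r)) by (apply in_zargs; eauto).
    apply Hag; auto. right; auto.
Qed.

Definition encoding (m : nat * nat -> bool) (rs : list (nat * nat)) (X : team M) : Prop :=
  (exists s, X s) /\ (forall s, X s -> s (cvar N) = Some c0) /\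
  (forall r, m r = true -> ~ In r rs /\ functional_on M N r X /\ total_on M N r X).

Lemma encoding_skip m r rs X : encoding m (r :: rs) X -> encoding m rs X.
Proof.
  intros (Hne & Hc & Hm). split; [|split]; auto.
  intros r' Hr'. destruct (Hm r' Hr') as (Hin & HX). simpl in Hin. tauto.
Qed.

(* Fills the argument variables of every block with [ds], reading the argument
   index off the Cantor code of the variable. *)
Definition zfill (ds : list (dom M)) (x : nat) : dom M :=
  nth (pred (snd (Cantor.of_nat (x - S (S N))))) ds c0.

Lemma zfill_zvar ds r i : zfill ds (zvar N r (S i)) = nth i ds c0.
Proof.
  unfold zfill, zvar. replace (S (S N) + _ - S (S N)) with (Cantor.to_nat (Cantor.to_nat r, S i)) by lia.
  rewrite Cantor.cancel_of_to. reflexivity.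
Qed.

Lemma encoding_extend m r rs X F : NoDup (r :: rs) -> encoding m (r :: rs) X ->
  functional_on M N r (extend_rel X r F) -> encoding (setm m r) rs (extend_rel X r F).
Proof.
  intros Hnd (Hne & Hc & Hm) Hfun.
  assert (Hoff := extend_rel_offblock X r F).
  destruct Hne as [s0 Hs0]. apply NoDup_cons_iff in Hnd. destruct Hnd as [Hr _].
  split; [|split].
  - destruct (proj2 Hoff s0 Hs0) as (t & Ht & _). eauto.
  - exact (offblock_cvar r X _ Hoff Hc).
  - intros r' Hr'. unfold setm in Hr'. destruct (rel_eq_dec r' r) as [->|Hne].
    + split; [auto|]. split; [auto|]. intros ds Hds.
      exists (ext r F s0 (zfill ds)). split; [apply extend_rel_mem; eauto|].
      intros i d Ed. assert (Hi : i < snd r) by (rewrite <- Hds; apply nth_error_Some; congruence).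
      rewrite ext_arg, zfill_zvar by auto. f_equal. apply nth_error_nth, Ed.
    + destruct (Hm r' Hr') as (Hin & Hf & Ht). split; [simpl in Hin; tauto|].
      split; [eapply offblock_functional|eapply offblock_total]; eauto.
Qed.

End RelationBlocks.

Lemma encoding_init {Sg} (M : structure Sg) N (F : assignment M -> dom M) rs :
  encoding M N (F (empty_assignment M)) (fun _ => false) rs
    (team_supp (empty_team M) F (cvar N)).
Proof.
  split; [|split].
  - exists (upd (empty_assignment M) (cvar N) (F (empty_assignment M))).
    exists (empty_assignment M). split; reflexivity.
  - intros s (s0 & E & ->). unfold empty_team in E. subst.
    unfold upd. rewrite Nat.eqb_refl. reflexivity.
  - discriminate.
Qed.

Section Prefix.
Context {Sg : signature} (M : structure Sg) (N : nat) (c0 : dom M).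
Variable body : (nat * nat -> bool) -> idform Sg.

Lemma sat_prefix_cons X r rs m :
  id_sat M X (prefix N (r :: rs) m body) <->
  id_sat M X (prefix N rs m body) \/
  exists F, id_sat M (extend_rel M N X r F) (dep (zargs N r) (wvar N r)) /\
            id_sat M (extend_rel M N X r F) (prefix N rs (setm m r) body).
Proof. cbn [prefix]. rewrite sat_or, sat_IAlls. reflexivity. Qed.

Lemma prefix_sound rs : forall m X, NoDup rs -> encoding M N c0 m rs X ->
  id_sat M X (prefix N rs m body) ->
  exists m' G, encoding M N c0 m' [] G /\ id_sat M G (body m').
Proof.
  induction rs as [|r rs IH]; intros m X Hnd HX H; [eauto|].
  rewrite sat_prefix_cons in H. destruct H as [H | (F & HD & H)].
  - apply (IH m X); auto; [eapply NoDup_cons_iff; eauto|eapply encoding_skip; eauto].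
  - rewrite sat_dep_zargs in HD.
    apply (IH (setm m r) (extend_rel M N X r F)); auto; [eapply NoDup_cons_iff; eauto|].
    apply encoding_extend; auto.
Qed.

Lemma ztuple_unique r ds ds' (s : assignment M) : length ds = length ds' ->
  ztuple M N r ds s -> ztuple M N r ds' s -> ds = ds'.
Proof.
  intros Hl Hz Hz'. apply nth_error_ext. intro i.
  destruct (nth_error ds i) as [d|] eqn:Ed, (nth_error ds' i) as [d'|] eqn:Ed'.
  - apply Hz in Ed. apply Hz' in Ed'. congruence.
  - apply nth_error_None in Ed'. assert (nth_error ds i <> None) by congruence.
    apply nth_error_Some in H. lia.
  - apply nth_error_None in Ed. assert (nth_error ds' i <> None) by congruence.
    apply nth_error_Some in H. lia.
  - reflexivity.
Qed.

Variable V : soval M.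

Definition graph_choice (r : nat * nat) (s : assignment M) : dom M :=
  if excluded_middle_informative
       (exists ds, length ds = snd r /\ ztuple M N r ds s /\ V (fst r) (snd r) ds)
  then epsilon (inhabits c0) (fun d => d <> c0) else c0.

Lemma graph_choice_functional X r :
  functional_on M N r (extend_rel M N X r (graph_choice r)).
Proof.
  intros t t' Ht Ht' Hz.
  apply extend_rel_mem in Ht, Ht'. destruct Ht as (s & h & _ & ->), Ht' as (s' & h' & _ & ->).
  rewrite !ext_w. f_equal. unfold graph_choice.
  assert (E : forall ds, length ds = snd r ->
    ztuple M N r ds (upd_all M s (zargs N r) h) <-> ztuple M N r ds (upd_all M s' (zargs N r) h')).
  { intros ds Hds. unfold ztuple. split; intros H i d Ed;
      assert (Hi : i < snd r) by (rewrite <- Hds; apply nth_error_Some; congruence);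
      specialize (H i d Ed); specialize (Hz i Hi); rewrite !ext_arg in Hz by auto;
      rewrite upd_all_in in * by (apply in_zargs; eauto); congruence. }
  destruct (excluded_middle_informative _) as [(ds & Hds & Hz1 & HV)|Hn1],
    (excluded_middle_informative _) as [(ds' & Hds' & Hz2 & HV')|Hn2]; auto.
  - exfalso. apply Hn2. exists ds. rewrite <- E; auto.
  - exfalso. apply Hn1. exists ds'. rewrite E; auto.
Qed.

Lemma graph_choice_decodes X r ds t :
  (exists ds0, length ds0 = snd r /\ ~ V (fst r) (snd r) ds0) -> length ds = snd r ->
  extend_rel M N X r (graph_choice r) t -> ztuple M N r ds t ->
  t (wvar N r) <> Some c0 <-> V (fst r) (snd r) ds.
Proof.
  intros (ds0 & Hds0 & HV0) Hds Ht Hz.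
  apply extend_rel_mem in Ht. destruct Ht as (s & h & _ & ->). rewrite ext_w.
  set (s1 := upd_all M s (zargs N r) h).
  assert (Hz1 : ztuple M N r ds s1).
  { intros i d Ed. assert (Hi : i < snd r) by (rewrite <- Hds; apply nth_error_Some; congruence).
    specialize (Hz i d Ed). rewrite ext_arg in Hz by auto. unfold s1.
    rewrite upd_all_in by (apply in_zargs; eauto). exact Hz. }
  unfold graph_choice. destruct (excluded_middle_informative _) as [(ds' & Hds' & Hz' & HV')|Hn].
  - replace ds with ds' by (eapply ztuple_unique; eauto; congruence).
    split; [auto|]. intros _ E. injection E as E. apply HV0.
    assert (Hall : forall d, d = c0).
    { intro d. apply NNPP. intro Hd.
      exact (epsilon_spec (inhabits c0) (fun d => d <> c0) (ex_intro _ d Hd) E). }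
    replace ds0 with ds'; auto.
    apply nth_ext with (d := c0) (d' := c0); [congruence|]. intros. rewrite Hall. auto.
  - split; [congruence|]. intros HV. exfalso. apply Hn. eauto.
Qed.

Variable rels : list (nat * nat).

Definition decodes_on (rs : list (nat * nat)) m (X : team M) : Prop :=
  forall r, In r rels -> ~ In r rs -> forall ds, length ds = snd r ->
  decode_rel M N c0 m X r ds <-> V (fst r) (snd r) ds.

Lemma prefix_complete rs : forall m X, NoDup rs -> encoding M N c0 m rs X ->
  decodes_on rs m X ->
  (forall m' G, encoding M N c0 m' [] G -> decodes_on [] m' G -> id_sat M G (body m')) ->
  id_sat M X (prefix N rs m body).
Proof.
  induction rs as [|r rs IH]; intros m X Hnd HX Hdec Hbody; [exact (Hbody m X HX Hdec)|].
  assert (Hr : ~ In r rs /\ NoDup rs) by (apply NoDup_cons_iff; auto).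
  rewrite sat_prefix_cons.
  destruct (classic (forall ds, length ds = snd r -> V (fst r) (snd r) ds)) as [Hfull|Hnfull].
  - left. apply IH; auto; [tauto|eapply encoding_skip; eauto|].
    intros r' Hr' Hnin ds Hds. destruct (rel_eq_dec r' r) as [->|Hne].
    + unfold decode_rel. destruct (m r) eqn:Hm.
      * exfalso. destruct HX as (_ & _ & HX). apply (HX r Hm). left. auto.
      * split; auto.
    + apply Hdec; auto. intros [E|E]; [congruence|auto].
  - right. exists (graph_choice r).
    set (T := extend_rel M N X r (graph_choice r)).
    assert (Hfun := graph_choice_functional X r).
    assert (HT : encoding M N c0 (setm m r) rs T) by (apply encoding_extend; auto).
    split; [apply sat_dep_zargs; auto|].
    apply IH; auto; [tauto|]. intros r' Hr' Hnin ds Hds.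
    unfold decode_rel, setm. destruct (rel_eq_dec r' r) as [->|Hne].
    + assert (Hds0 : exists ds0, length ds0 = snd r /\ ~ V (fst r) (snd r) ds0).
      { apply not_all_ex_not in Hnfull. destruct Hnfull as [ds0 H].
        apply imply_to_and in H. eauto. }
      split.
      * intros H. destruct HT as (_ & _ & HT).
        assert (Hm : setm m r r = true) by (unfold setm; destruct (rel_eq_dec r r); congruence).
        destruct (proj2 (proj2 (HT r Hm)) ds Hds) as (t & Ht & Hz).
        apply (graph_choice_decodes X r ds t); auto.
      * intros HV t Ht Hz. apply (graph_choice_decodes X r ds t); auto.
    + change (decode_rel M N c0 m T r' ds <-> V (fst r') (snd r') ds).
      rewrite <- (offblock_decode M N c0 m r r' X T ds Hne (extend_rel_offblock M N c0 X r _)).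
      apply Hdec; auto. intros [E|E]; [congruence|auto].
Qed.

End Prefix.

(** * Free variables *)

Section FreeVariables.
Context {Sg : signature} (N : nat).

Definition in_blocks (m : nat * nat -> bool) (x : nat) : Prop :=
  exists r l, m r = true /\ l <= snd r /\ x = zvar N r l.

Lemma idfv_IAlls xs (p : idform Sg) x : idfv (IAlls xs p) x -> idfv p x /\ ~ In x xs.
Proof. induction xs as [|y xs IH]; simpl; [tauto|]. intros [H Hne]. apply IH in H. intuition. Qed.

Lemma idfv_dep xs y x : idfv (@dep Sg xs y) x -> In x xs \/ x = y.
Proof.
  unfold dep. simpl. intros [H|H]; [left|right; auto].
  induction xs as [|z xs IH]; simpl in *; [tauto|]. destruct H as [H|H]; auto.
Qed.

Lemma idfv_uniform_ex y (p : idform Sg) x : idfv (uniform_ex N y p) x -> x < S N \/ idfv p x.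
Proof.
  unfold uniform_ex. cbn [idfv]. intros [[H|H] Hne]; [left|auto].
  apply idfv_dep in H. destruct H as [H|H]; [|congruence].
  apply in_remove in H. unfold lows in H. rewrite in_seq in H. lia.
Qed.

Lemma idfv_split_or (A B : idform Sg) x : idfv (split_or N A B) x ->
  x < S N \/ x = cvar N \/ idfv A x \/ idfv B x.
Proof.
  unfold split_or. cbn [idfv]. intros [H|H]; [auto|].
  apply idfv_uniform_ex in H. unfold uc, uvar in H. simpl in H. intuition (subst; auto).
Qed.

Lemma idfv_zeqs r l args x : idfv (@zeqs Sg N r l args) x ->
  (exists i, i < length args /\ x = zvar N r (S (l + i))) \/ (exists t, In t args /\ tfv t x).
Proof.
  revert l. induction args as [|t ts IH]; simpl; intros l H; [tauto|].
  destruct H as [[H|H]|H].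
  - left. exists 0. split; [lia|]. rewrite Nat.add_0_r. auto.
  - right. eauto.
  - destruct (IH (S l) H) as [(i & Hi & ->)|(t' & Ht' & E)]; [left|right; eauto].
    exists (S i). split; [lia|]. rewrite Nat.add_succ_r. reflexivity.
Qed.

Lemma idfv_tr m (p : soform Sg) : (forall y, sovars p y -> y < N) -> forall pol x,
  idfv (tr N m pol p) x -> x < S N \/ x = cvar N \/ in_blocks m x.
Proof.
  induction p as [t1 t2|r a|i args|q IH|q IHq q' IHq'|q IHq q' IHq'|y q IH|y q IH
                  |i k q IH|i k q IH]; cbn [sovars tr]; intros Hvars pol x H.
  - left. destruct pol; simpl in H; [|destruct H as [H|[]]]; apply Nat.lt_lt_succ_r; auto.
  - left. destruct pol; simpl in H; [|destruct H as [H|[]]]; apply Nat.lt_lt_succ_r; auto.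
  - destruct (m (i, length args)) eqn:Hm; [|destruct pol; simpl in H; tauto].
    cbn [idfv] in H. destruct H as [H|H].
    + apply idfv_zeqs in H. destruct H as [(l & Hl & ->)|(t & Ht & Hx)].
      * right; right. exists (i, length args), (S l). simpl. split; [auto|split; [lia|auto]].
      * left. apply Nat.lt_lt_succ_r, Hvars. eauto.
    + assert (Hw : x = wvar N (i, length args) \/ x = cvar N)
        by (destruct pol; simpl in H; intuition).
      destruct Hw as [-> | ->]; [right; right|auto].
      exists (i, length args), 0. split; [auto|split; [lia|reflexivity]].
  - eapply IH; eauto.
  - destruct pol; [destruct H as [H|H]|apply idfv_split_or in H; intuition];
      [eapply IHq|eapply IHq'|eapply IHq|eapply IHq']; eauto.
  - destruct pol; [apply idfv_split_or in H; intuition|destruct H as [H|H]];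
      [eapply IHq|eapply IHq'|eapply IHq|eapply IHq']; eauto.
  - destruct pol; [destruct H as [H _]|apply idfv_uniform_ex in H; destruct H as [H|H]; [auto|]];
      eapply IH; eauto.
  - destruct pol; [apply idfv_uniform_ex in H; destruct H as [H|H]; [auto|]|destruct H as [H _]];
      eapply IH; eauto.
  - simpl in H. tauto.
  - simpl in H. tauto.
Qed.

Lemma idfv_prefix rs (body : (nat * nat -> bool) -> idform Sg) : forall m x,
  idfv (prefix N rs m body) x ->
  (forall m', idfv (body m') x -> x = cvar N \/ in_blocks m' x) ->
  x = cvar N \/ in_blocks m x.
Proof.
  induction rs as [|r rs IH]; simpl; intros m x H Hbody; [auto|].
  destruct H as [H|H]; [eapply IH; eauto|].
  apply idfv_IAlls in H. destruct H as [[[H|H] Hw] Hz]; [apply idfv_dep in H; tauto|].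
  destruct (IH _ x H Hbody) as [E|(r' & l & Hr' & Hl & ->)]; [auto|].
  unfold setm in Hr'. destruct (rel_eq_dec r' r) as [->|Hne].
  - exfalso. destruct l as [|i]; [apply Hw; reflexivity|].
    apply Hz, in_zargs. exists i. split; [lia|auto].
  - right. exists r', l. auto.
Qed.

End FreeVariables.

Section Body.
Context {Sg : signature} (M : structure Sg) (N : nat).

Lemma saturated_team_dups (G : team M) : saturated M N G (team_dups M G (lows N)).
Proof.
  assert (Hlows : forall x, In x (lows N) <-> x < S N) by (intro; unfold lows; rewrite in_seq; lia).
  assert (Hglue : forall g g' h, glue M N (upd_all M g (lows N) h) g' = upd_all M g' (lows N) h).
  { intros g g' h. apply functional_extensionality. intro x. unfold glue.
    destruct (Nat.ltb_spec x (S N)).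
    - rewrite !upd_all_in by (apply Hlows; auto). reflexivity.
    - rewrite upd_all_out by (rewrite Hlows; lia). reflexivity. }
  split; [|split].
  - intros s Hs y Hy. apply team_dups_mem in Hs. destruct Hs as (g & h & Hg & ->).
    rewrite upd_all_in by (apply Hlows; auto). discriminate.
  - intros s Hs. apply team_dups_mem in Hs. destruct Hs as (g & h & Hg & ->).
    exists g. split; auto.
  - intros s g' Hs Hg'. apply team_dups_mem in Hs. destruct Hs as (g & h & Hg & ->).
    rewrite Hglue. apply team_dups_mem. eauto.
Qed.

Lemma sat_body c0 m G theta : encoding M N c0 m [] G -> is_fo theta ->
  (forall x, sovars theta x -> x < N) -> (forall x, ~ sofv theta x) ->
  id_sat M G (IAlls (lows N) (tr N m false theta)) <->
  forall v, ~ so_holds M v (decode M N c0 m G) theta.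
Proof.
  intros ([g Hg] & Hc & Hm) Hfo Hvars Hfree.
  rewrite sat_IAlls.
  rewrite (expresses_tr M N c0 G m Hc (fun r H => proj1 (proj2 (Hm r H)))
             (fun r H => proj2 (proj2 (Hm r H))) theta Hfo Hvars false _ (saturated_team_dups G)).
  cbn [signed]. split.
  - intros H v Hv. apply (H (upd_all M g (lows N) (fun _ => c0))); [apply team_dups_mem; eauto|].
    rewrite (so_holds_ext M theta _ v _ (decode M N c0 m G)); [exact Hv| |reflexivity].
    intros x Hx. destruct (Hfree x Hx).
  - intros H s _. apply H.
Qed.

End Body.

Definition refutation_body {Sg} (N : nat) (theta : soform Sg) (m : nat * nat -> bool) : idform Sg :=
  IAlls (lows N) (tr N m false theta).

Definition refutation {Sg} (theta : soform Sg) : idform Sg :=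
  IEx (cvar (sobound theta))
    (prefix (sobound theta) (nodup rel_eq_dec (occs theta)) (fun _ => false)
       (refutation_body (sobound theta) theta)).

Lemma refutation_closed {Sg} (theta : soform Sg) x : ~ idfv (refutation theta) x.
Proof.
  set (N := sobound theta). intros [Hx Hc].
  assert (Hbody : forall m, idfv (refutation_body N theta m) x -> x = cvar N \/ in_blocks N m x).
  { intros m Hb. apply idfv_IAlls in Hb. destruct Hb as [Hb Hlow].
    destruct (idfv_tr N m theta (sovars_lt_sobound theta) false x Hb) as [Hl|E]; [|auto].
    exfalso. apply Hlow. unfold lows. apply in_seq. lia. }
  destruct (idfv_prefix N _ _ (fun _ => false) x Hx Hbody) as [E|(r & l & Hf & _)];
    [contradiction|discriminate].
Qed.

Lemma sat_refutation {Sg} (M : structure Sg) (theta : soform Sg) :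
  is_fo theta -> (forall x, ~ sofv theta x) ->
  id_sat M (empty_team M) (refutation theta) <-> exists v V, ~ so_holds M v V theta.
Proof.
  intros Hfo Hfree. set (N := sobound theta). set (rels := nodup rel_eq_dec (occs theta)).
  assert (Hvars : forall x, sovars theta x -> x < N) by apply sovars_lt_sobound.
  split.
  - intros (F & HF).
    destruct (prefix_sound M N _ _ rels _ _ (NoDup_nodup _ _) (encoding_init M N F rels) HF)
      as (m & G & HG & Hbody).
    exists (fun _ => F (empty_assignment M)), (decode M N (F (empty_assignment M)) m G).
    exact (proj1 (sat_body M N _ m G theta HG Hfo Hvars Hfree) Hbody _).
  - intros (v & V & Hv). exists (fun _ => v 0).
    apply (prefix_complete M N (v 0) _ V rels rels);
      [apply NoDup_nodup|apply (encoding_init M N (fun _ => v 0))|intros r Hr Hn; contradiction|].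
    intros m G HG Hdec. apply (proj2 (sat_body M N _ m G theta HG Hfo Hvars Hfree)).
    intros v' Hv'. apply Hv.
    rewrite (so_holds_ext M theta v' v _ V) in Hv'; auto.
    + intros x Hx. destruct (Hfree x Hx).
    + intros i k l Hik Hl. apply (Hdec (i, k)); auto. apply nodup_In, sofv2_occs, Hik.
Qed.

Theorem corollary4p8 :
  forall (S : signature) (psi : soform S),
    pi11_sentence psi ->
    exists phi : idform S,
      id_sentence phi /\
      forall M : structure S,
        so_models M psi <-> id_sat M (empty_team M) phi.
Proof.
  intros Sg psi [Hpi [Hclosed _]].
  assert (Hfree : forall x, ~ sofv (so_matrix psi) x)
    by (intros x Hx; apply (Hclosed x), sofv_matrix, Hx).
  exists (ineg (refutation (so_matrix psi))). split.
  - intros x [Hx|[]]. exact (refutation_closed _ x Hx).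
  - intros M.
    rewrite so_models_matrix, sat_neg_empty_team, sat_refutation by auto using is_fo_matrix.
    split.
    + intros H (v & V & Hv). exact (Hv (H v V)).
    + intros H v V. apply NNPP. intro Hv. eauto.
Qed.
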